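(* Suppose the system is exponentially incrementally input/output-to-state stable as in the context, with constant $\eta\in[0,1)$. Let $Q,R\succ0$, let the stage cost be $l(x,w;(u,y))=|w|_Q^2+|y-h(x,u)|_R^2$, and let $t_1\le t_2$ be nonnegative integers. Then there exist $C_1,C_2,C_3>0$ such that $$|x_\tau-\hat x_\tau|^2\le C_1\eta^{\tau-t_1}|x_{t_1}-\hat x_{t_1}|^2+C_2\max_{j\in\{t_1,\dots,\tau-1\}}\{|w_j|^2,|v_j|^2\}+C_3J_{[t_1,t_2]}(\hat z_{t_1:t_2})$$ for all $\tau\in\{t_1,\dots,t_2\}$, all initial conditions $x_0,\hat x_0\in\mathcal{X}$, and all sequences $u\in\mathcal{U}^\infty$, $w,\hat w\in\mathcal{W}^\infty$, $v\in\mathcal{V}^\infty$, where $x_{j+1}=f(x_j,u_j,w_j)$, $y_j=h(x_j,u_j)+v_j$, $\hat x_{j+1}=f(\hat x_j,u_j,\hat w_j)$, $\hat z_j=(\hat x_j,\hat w_j)$ for all $j\ge0$ (the maximum over an empty index set, i.e. for $\tau=t_1$, is $0$).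
   Context: System: $x_{t+1}=f(x_t,u_t,w_t)$, $y_t=h(x_t,u_t)+v_t$ with $f,h$ continuous and known sets $\mathcal{X}\subseteq\mathbb{R}^n$, $\mathcal{U}$, $\mathcal{W}\ni0$, $\mathcal{V}$ with $f(\mathcal{X}\times\mathcal{U}\times\mathcal{W})\subseteq\mathcal{X}$; $d_j=(u_j,y_j)$. Performance criterion: $J_{[t_1,t_2]}(\hat z_{t_1:t_2})=\sum_{j=t_1}^{t_2-1}l(\hat z_j;d_j)$. $|x|_Q^2=x^\top Qx$. Exponential i-IOSS (assumed): there exist a continuous $U:\mathcal{X}\times\mathcal{X}\to\mathbb{R}_{\ge0}$, matrices $P_1,P_2,S_w,S_y\succ0$ and $\eta\in[0,1)$ such that $|x_1-x_2|_{P_1}^2\le U(x_1,x_2)\le|x_1-x_2|_{P_2}^2$ and $U(f(x_1,u,w_1),f(x_2,u,w_2))\le\eta U(x_1,x_2)+|w_1-w_2|_{S_w}^2+|h(x_1,u)-h(x_2,u)|_{S_y}^2$ for all $(x_1,u,w_1),(x_2,u,w_2)\in\mathcal{X}\times\mathcal{U}\times\mathcal{W}$. *)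

From HB Require Import structures.
From mathcomp Require Import all_boot all_order all_algebra.
From mathcomp Require Import all_classical all_reals all_analysis.
Set Implicit Arguments. Unset Strict Implicit. Unset Printing Implicit Defensive.
Import Order.TTheory GRing.Theory Num.Theory.
Import numFieldNormedType.Exports.
Local Open Scope classical_set_scope.
Local Open Scope ring_scope.

Definition qf (R : realType) (n : nat) (Q : 'M[R]_n) (x : 'cV[R]_n) : R :=
  (x^T *m Q *m x) 0 0.

Definition sqnorm (R : realType) (n : nat) (x : 'cV[R]_n) : R :=
  \sum_(i < n) (x i 0) ^+ 2.

Definition posdef (R : realType) (n : nat) (Q : 'M[R]_n) : Prop :=
  Q^T = Q /\ forall x : 'cV[R]_n, x != 0 -> 0 < qf Q x.

Definition exp_iIOSS (R : realType) (n m q p : nat)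
  (X : set 'cV[R]_n) (Uset : set 'cV[R]_m) (W : set 'cV[R]_q)
  (f : 'cV[R]_n -> 'cV[R]_m -> 'cV[R]_q -> 'cV[R]_n)
  (h : 'cV[R]_n -> 'cV[R]_m -> 'cV[R]_p) (eta : R) : Prop :=
  exists (U : 'cV[R]_n -> 'cV[R]_n -> R)
         (P1 P2 : 'M[R]_n) (Sw : 'M[R]_q) (Sy : 'M[R]_p),
    {within [set z | X z.1 /\ X z.2], continuous (fun z => U z.1 z.2)} /\
    (forall x1 x2, X x1 -> X x2 -> 0 <= U x1 x2) /\
    posdef P1 /\ posdef P2 /\ posdef Sw /\ posdef Sy /\
    0 <= eta < 1 /\
    (forall x1 x2, X x1 -> X x2 ->
       qf P1 (x1 - x2) <= U x1 x2 /\ U x1 x2 <= qf P2 (x1 - x2)) /\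
    (forall x1 x2 u w1 w2, X x1 -> X x2 -> Uset u -> W w1 -> W w2 ->
       U (f x1 u w1) (f x2 u w2) <=
         eta * U x1 x2 + qf Sw (w1 - w2) + qf Sy (h x1 u - h x2 u)).

Definition stage_cost (R : realType) (n m q p : nat)
  (h : 'cV[R]_n -> 'cV[R]_m -> 'cV[R]_p) (Q : 'M[R]_q) (Rm : 'M[R]_p)
  (x : 'cV[R]_n) (w : 'cV[R]_q) (u : 'cV[R]_m) (y : 'cV[R]_p) : R :=
  qf Q w + qf Rm (y - h x u).

Definition perf_J (R : realType) (n m q p : nat)
  (h : 'cV[R]_n -> 'cV[R]_m -> 'cV[R]_p) (Q : 'M[R]_q) (Rm : 'M[R]_p)
  (t1 t2 : nat) (xhat : nat -> 'cV[R]_n) (what : nat -> 'cV[R]_q)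
  (u : nat -> 'cV[R]_m) (y : nat -> 'cV[R]_p) : R :=
  \sum_(t1 <= j < t2) stage_cost h Q Rm (xhat j) (what j) (u j) (y j).

From HB Require Import structures.
From mathcomp Require Import all_boot all_order all_algebra.
From mathcomp Require Import all_classical all_reals all_analysis.
From mathcomp Require Import ring lra.
Set Implicit Arguments. Unset Strict Implicit. Unset Printing Implicit Defensive.
Import Order.TTheory GRing.Theory Num.Theory.
Import numFieldNormedType.Exports.
Local Open Scope classical_set_scope.
Local Open Scope ring_scope.

(* The i-IOSS function U is a Lyapunov function for the estimation error x - xhat.  Every
   positive definite quadratic form lies between two multiples of |.|^2 (its extrema on the
   compact unit sphere).  Splitting the output difference h(x,u) - h(xhat,u) through the
   measurement y into the noise y - h(x,u) = v and the residual y - h(xhat,u), one step reads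
     U_{j+1} <= eta U_j + K (|w_j|^2 + |v_j|^2) + K l(zhat_j; d_j).
   Iterating from t1 and using eta <= 1 to drop the geometric weights of the inputs gives
     U_tau <= eta^(tau-t1) U_t1 + 2 K (tau-t1) max_j {|w_j|^2, |v_j|^2} + K J,
   and the quadratic bounds on U turn both ends into squared Euclidean norms. *)

Section QuadraticForms.
Variables (R : realType) (n : nat).
Implicit Types (P : 'M[R]_n) (x y : 'cV[R]_n).

Lemma qfE P x : qf P x = \sum_(i < n) \sum_(j < n) x i 0 * P i j * x j 0.
Proof.
rewrite /qf mxE exchange_big /=; apply: eq_bigr => i _.
rewrite mxE big_distrl /=; apply: eq_bigr => j _.
by rewrite !mxE.
Qed.

Lemma sqnorm_qf1 x : sqnorm x = qf 1%:M x.
Proof.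
rewrite /qf mulmx1 mxE; apply: eq_bigr => i _.
by rewrite mxE expr2.
Qed.

Lemma qfZ P a x : qf P (a *: x) = a ^+ 2 * qf P x.
Proof.
by rewrite /qf !linearZ /= -!scalemxAl !mxE mulrA expr2.
Qed.

Lemma qf0 P : qf P 0 = 0.
Proof. by rewrite /qf !mulmx0 mxE. Qed.

Lemma sqnorm0 : sqnorm (0 : 'cV[R]_n) = 0.
Proof. by rewrite sqnorm_qf1 qf0. Qed.

Lemma qfN P x : qf P (- x) = qf P x.
Proof. by rewrite -scaleN1r qfZ sqrrN expr1n mul1r. Qed.

Lemma sqnormZ a x : sqnorm (a *: x) = a ^+ 2 * sqnorm x.
Proof. by rewrite !sqnorm_qf1 qfZ. Qed.

Lemma sqnorm_ge0 x : 0 <= sqnorm x.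
Proof. by apply: sumr_ge0 => i _; apply: sqr_ge0. Qed.

Lemma sqr_le_sqnorm x i : x i 0 ^+ 2 <= sqnorm x.
Proof.
rewrite /sqnorm (bigD1 i) //= lerDl.
by apply: sumr_ge0 => j _; apply: sqr_ge0.
Qed.

Lemma sqnorm_eq0 x : (sqnorm x == 0) = (x == 0).
Proof.
apply/idP/eqP => [/eqP x0 | ->]; last by rewrite sqnorm0.
apply/matrixP => i j; rewrite (ord1 j) mxE; apply/eqP.
by rewrite -sqrf_eq0 eq_le sqr_ge0 andbT -x0 sqr_le_sqnorm.
Qed.

Lemma sqnormB_le x y : sqnorm (x - y) <= 2 * sqnorm x + 2 * sqnorm y.
Proof.
rewrite /sqnorm !mulr_sumr -big_split /=; apply: ler_sum => i _.
rewrite !mxE -subr_ge0.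
have -> : 2 * x i 0 ^+ 2 + 2 * y i 0 ^+ 2 - (x i 0 - y i 0) ^+ 2
  = (x i 0 + y i 0) ^+ 2 by ring.
exact: sqr_ge0.
Qed.

(* At [x = 0] the junk value [0^-1 = 0] keeps the identity true. *)
Lemma qf_sphere_scale P x :
  qf P x = sqnorm x * qf P ((Num.sqrt (sqnorm x))^-1 *: x).
Proof.
have [->|x0] := eqVneq x 0; first by rewrite scaler0 qf0 mulr0.
have s_gt0 : 0 < sqnorm x by rewrite lt0r sqnorm_eq0 x0 sqnorm_ge0.
rewrite qfZ exprVn sqr_sqrtr ?sqnorm_ge0 // mulrA mulfV ?mul1r //.
by rewrite gt_eqF.
Qed.

Lemma sqnorm_sphere_scale x :
  x != 0 -> sqnorm ((Num.sqrt (sqnorm x))^-1 *: x) = 1.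
Proof.
move=> x0; have s_gt0 : 0 < sqnorm x by rewrite lt0r sqnorm_eq0 x0 sqnorm_ge0.
by rewrite sqnormZ exprVn sqr_sqrtr ?sqnorm_ge0 // mulVf // gt_eqF.
Qed.

Lemma qf_ge_sphere P a :
  (forall y, sqnorm y = 1 -> a <= qf P y) -> forall x, a * sqnorm x <= qf P x.
Proof.
move=> a_le x; have [->|x0] := eqVneq x 0.
  by rewrite qf0 sqnorm0 mulr0.
rewrite [leRHS]qf_sphere_scale mulrC ler_wpM2l ?sqnorm_ge0 //.
exact/a_le/sqnorm_sphere_scale.
Qed.

Lemma qf_le_sphere P C :
  (forall y, sqnorm y = 1 -> qf P y <= C) -> forall x, qf P x <= C * sqnorm x.
Proof.
move=> le_C x; have [->|x0] := eqVneq x 0.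
  by rewrite qf0 sqnorm0 mulr0.
rewrite [leLHS]qf_sphere_scale mulrC ler_wpM2r ?sqnorm_ge0 //.
exact/le_C/sqnorm_sphere_scale.
Qed.

Lemma posdef_qf_ge0 P x : posdef P -> 0 <= qf P x.
Proof.
case=> _ P_pos; have [->|x0] := eqVneq x 0; first by rewrite qf0.
exact/ltW/P_pos.
Qed.

Lemma continuous_qf_trmx P : continuous (fun v : 'rV[R]_n => qf P v^T).
Proof.
have -> : (fun v : 'rV[R]_n => qf P v^T) =
          (fun v => \sum_(i < n) \sum_(j < n) v 0 i * P i j * v 0 j).
  apply: funext => v; rewrite qfE.
  by apply: eq_bigr => i _; apply: eq_bigr => j _; rewrite !mxE.
have add_cont : continuous (fun z : R * R => z.1 + z.2) by exact: add_continuous.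
apply: (@continuous_big _ _ +%R 0 xpredT add_cont) => i _.
apply: (@continuous_big _ _ +%R 0 xpredT add_cont) => j _.
move=> v; apply: (@continuousM R _ (fun v : 'rV[R]_n => v 0 i * P i j) (fun v => v 0 j)).
  apply: (@continuousM R _ (fun v : 'rV[R]_n => v 0 i) (fun=> P i j)).
    exact: coord_continuous.
  exact: cst_continuous.
exact: coord_continuous.
Qed.

(* The library proves Heine-Borel for row vectors only, hence the transposed sphere. *)
Lemma compact_sphere_trmx : compact [set v : 'rV[R]_n | sqnorm v^T = 1].
Proof.
apply: bounded_closed_compact.
  exists 1; split; first exact: num_real.
  move=> M M_gt1 v /= v1; apply: le_trans (ltW M_gt1).
  rewrite [`|v|]/(Num.norm _) /= mx_normrE; apply: bigmax_le => // -[i j] _ /=.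
  rewrite (ord1 i) -(expr_le1 (ltn0Sn 1)) // real_normK ?num_real // -v1.
  by have := sqr_le_sqnorm v^T j; rewrite mxE.
rewrite (_ : [set v | _] = (fun v : 'rV[R]_n => qf 1%:M v^T) @^-1` [set 1]).
  by apply: preimage_closed => [v _|]; [exact: continuous_qf_trmx | exact: closed_eq].
by apply: funext => v; rewrite /preimage /= sqnorm_qf1.
Qed.

Lemma qf_sphere_extrema P : (exists y : 'cV[R]_n, sqnorm y = 1) ->
  exists y0 y1 : 'cV[R]_n, [/\ sqnorm y0 = 1, sqnorm y1 = 1 &
    forall y, sqnorm y = 1 -> qf P y0 <= qf P y <= qf P y1].
Proof.
case=> y y_1.
have sphere0 : [set v : 'rV[R]_n | sqnorm v^T = 1] !=set0 by exists y^T; rewrite /= trmxK.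
have qf_cont := continuous_subspaceT (@continuous_qf_trmx P).
have [v0 /[1!inE] v0_1 v0_min] := compact_EVT_min sphere0 compact_sphere_trmx (qf_cont _).
have [v1 /[1!inE] v1_1 v1_max] := compact_EVT_max sphere0 compact_sphere_trmx (qf_cont _).
exists v0^T, v1^T; split=> // z z_1.
have z_in : z^T \in [set v : 'rV[R]_n | sqnorm v^T = 1] by rewrite inE /= trmxK.
by move: (v0_min _ z_in) (v1_max _ z_in); rewrite trmxK => -> ->.
Qed.

Lemma qf_le_sqnorm P : exists2 C, 0 < C & forall x, qf P x <= C * sqnorm x.
Proof.
have [/(qf_sphere_extrema P) [y0 [y1 [_ _ y1_max]]] | no_sphere] :=
  pselect (exists y : 'cV[R]_n, sqnorm y = 1); last first.
  by exists 1 => //; apply: qf_le_sphere => y y_1; case: no_sphere; exists y.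
exists (`|qf P y1| + 1); first by rewrite ltr_pwDr.
apply: qf_le_sphere => y /y1_max /andP[_ /le_trans]; apply.
by rewrite ler_wpDr // real_ler_norm ?num_real.
Qed.

Lemma posdef_qf_ge_sqnorm P :
  posdef P -> exists2 c, 0 < c & forall x, c * sqnorm x <= qf P x.
Proof.
move=> P_pd; have [/(qf_sphere_extrema P) [y0 [y1 [y0_1 _ y0_min]]] | no_sphere] :=
  pselect (exists y : 'cV[R]_n, sqnorm y = 1); last first.
  by exists 1 => //; apply: qf_ge_sphere => y y_1; case: no_sphere; exists y.
exists (qf P y0); last by apply: qf_ge_sphere => y /y0_min /andP[].
by case: P_pd => _; apply; rewrite -sqnorm_eq0 y0_1 oner_eq0.
Qed.

Lemma qf_subr_le P Q : posdef Q ->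
  exists2 K, 0 < K & forall x y, qf P (x - y) <= K * (sqnorm x + qf Q y).
Proof.
move=> Q_posdef; have [C C_gt0 le_C] := qf_le_sqnorm P.
have [c c_gt0 ge_c] := posdef_qf_ge_sqnorm Q_posdef.
exists (2 * C + 2 * C / c) => [|x y]; first by rewrite addr_gt0 ?divr_gt0 ?mulr_gt0.
have y_le : sqnorm y <= qf Q y / c by rewrite ler_pdivlMr // mulrC ge_c.
apply: le_trans (le_C _) _.
apply: (le_trans (y := C * (2 * sqnorm x + 2 * (qf Q y / c)))).
  apply: ler_wpM2l; first exact: ltW.
  by apply: le_trans (sqnormB_le x y) _; rewrite lerD2l ler_pM2l.
rewrite -subr_ge0.
have -> : (2 * C + 2 * C / c) * (sqnorm x + qf Q y) - C * (2 * sqnorm x + 2 * (qf Q y / c))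
    = 2 * C * qf Q y + 2 * (C / c) * sqnorm x by ring.
have C_ge0 : 0 <= C by exact: ltW.
apply: addr_ge0; apply: mulr_ge0.
- by rewrite mulr_ge0.
- exact: posdef_qf_ge0.
- by rewrite mulr_ge0 // divr_ge0 // ltW.
- exact: sqnorm_ge0.
Qed.

End QuadraticForms.

Section IOSSDissipation.
Variables (R : realType) (n m q p : nat).
Variables (X : set 'cV[R]_n) (Uset : set 'cV[R]_m) (W : set 'cV[R]_q).
Variables (f : 'cV[R]_n -> 'cV[R]_m -> 'cV[R]_q -> 'cV[R]_n).
Variables (h : 'cV[R]_n -> 'cV[R]_m -> 'cV[R]_p) (eta : R).
Variables (Q : 'M[R]_q) (Rm : 'M[R]_p).

Lemma stage_cost_ge0 x w u y :
  posdef Q -> posdef Rm -> 0 <= stage_cost h Q Rm x w u y.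
Proof. by move=> Q_pd Rm_pd; rewrite addr_ge0 ?posdef_qf_ge0. Qed.

Lemma exp_iIOSS_rate : exp_iIOSS X Uset W f h eta -> 0 <= eta < 1.
Proof. by case=> U [P1 [P2 [Sw [Sy [_ [_ [_ [_ [_ [_ [eta01 _]]]]]]]]]]]. Qed.

Lemma exp_iIOSS_dissipation : exp_iIOSS X Uset W f h eta -> posdef Q -> posdef Rm ->
  exists (U : 'cV[R]_n -> 'cV[R]_n -> R) (c C K : R),
    [/\ 0 < c, 0 < C, 0 < K,
        forall x1 x2, X x1 -> X x2 ->
          c * sqnorm (x1 - x2) <= U x1 x2 /\ U x1 x2 <= C * sqnorm (x1 - x2) &
        forall x1 x2 u w1 w2 y, X x1 -> X x2 -> Uset u -> W w1 -> W w2 ->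
          U (f x1 u w1) (f x2 u w2) <= eta * U x1 x2
            + K * (sqnorm w1 + sqnorm (y - h x1 u)) + K * stage_cost h Q Rm x2 w2 u y].
Proof.
case=> U [P1 [P2 [Sw [Sy [_ [_ [P1_pd [_ [_ [_ [_ [U_sandwich U_step]]]]]]]]]]]].
move=> Q_pd Rm_pd.
have [c c_gt0 ge_c] := posdef_qf_ge_sqnorm P1_pd.
have [C C_gt0 le_C] := qf_le_sqnorm P2.
have [Kw Kw_gt0 le_Kw] := qf_subr_le Sw Q_pd.
have [Ky Ky_gt0 le_Ky] := qf_subr_le Sy Rm_pd.
exists U, c, C, (Kw + Ky); split => [||||x1 x2 u w1 w2 y X1 X2 Uu W1 W2].
- by [].
- by [].
- exact: addr_gt0.
- move=> x1 x2 X1 X2; have [lb ub] := U_sandwich _ _ X1 X2.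
  by split; [exact: le_trans (ge_c _) lb | exact: le_trans ub (le_C _)].
apply: le_trans (U_step _ _ _ _ _ X1 X2 Uu W1 W2) _.
have -> : h x1 u - h x2 u = - ((y - h x1 u) - (y - h x2 u)).
  by rewrite !opprB [RHS]addrC addrA subrK.
rewrite qfN /stage_cost; have := le_Kw w1 w2; have := le_Ky (y - h x1 u) (y - h x2 u).
have := sqnorm_ge0 w1; have := sqnorm_ge0 (y - h x1 u).
have := posdef_qf_ge0 w2 Q_pd; have := posdef_qf_ge0 (y - h x2 u) Rm_pd.
nra.
Qed.

End IOSSDissipation.

Lemma dissipation_sum_le (R : numDomainType) (D a : nat -> R) (eta : R) (t k : nat) :
  0 <= eta <= 1 ->
  (forall j, (t <= j < t + k)%N -> 0 <= a j) ->
  (forall j, (t <= j < t + k)%N -> D j.+1 <= eta * D j + a j) ->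
  D (t + k)%N <= eta ^+ k * D t + \sum_(t <= j < t + k) a j.
Proof.
case/andP=> eta_ge0 eta_le1; elim: k => [|k IH] a_ge0 D_step.
  by rewrite addn0 expr0 mul1r big_geq // addr0.
have in_k j : (t <= j < t + k)%N -> (t <= j < t + k.+1)%N.
  by case/andP=> -> /ltn_trans; apply; rewrite addnS.
have last_k : (t <= t + k < t + k.+1)%N by rewrite leq_addr addnS ltnSn.
have S_ge0 : 0 <= \sum_(t <= j < t + k) a j.
  by rewrite big_nat sumr_ge0 // => j /in_k /a_ge0.
rewrite addnS big_nat_recr ?leq_addr //= exprS -mulrA.
apply: le_trans (D_step _ last_k) _; rewrite addrA lerD2r.
apply: le_trans (ler_wpM2l eta_ge0 (IH (fun j hj => a_ge0 j (in_k j hj))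
                                       (fun j hj => D_step j (in_k j hj)))) _.
by rewrite mulrDr lerD2l ler_piMl.
Qed.

Lemma sum_le_bigmax (R : realDomainType) (F : nat -> R) (a b : nat) :
  \sum_(a <= j < b) F j <= (b - a)%:R * \big[Num.max/0]_(a <= j < b) F j.
Proof.
rewrite mulr_natl -sumr_const_nat; apply: ler_sum_nat => j j_in.
by apply: le_bigmax_seq; rewrite ?mem_index_iota.
Qed.

Section EstimationError.
Variables (R : realType) (n m q p : nat).
Variables (X : set 'cV[R]_n) (Uset : set 'cV[R]_m) (W : set 'cV[R]_q).
Variables (f : 'cV[R]_n -> 'cV[R]_m -> 'cV[R]_q -> 'cV[R]_n).
Variables (h : 'cV[R]_n -> 'cV[R]_m -> 'cV[R]_p) (eta : R).
Variables (Q : 'M[R]_q) (Rm : 'M[R]_p).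
Variables (U : 'cV[R]_n -> 'cV[R]_n -> R) (c C K : R).
Hypotheses (eta_ge0 : 0 <= eta) (eta_le1 : eta <= 1) (c_gt0 : 0 < c) (K_gt0 : 0 < K).
Hypotheses (Q_pd : posdef Q) (Rm_pd : posdef Rm).
Hypothesis fX : forall x u w, X x -> Uset u -> W w -> X (f x u w).
Hypothesis U_sandwich : forall x1 x2, X x1 -> X x2 ->
  c * sqnorm (x1 - x2) <= U x1 x2 /\ U x1 x2 <= C * sqnorm (x1 - x2).
Hypothesis U_dissipation : forall x1 x2 u w1 w2 y, X x1 -> X x2 -> Uset u -> W w1 -> W w2 ->
  U (f x1 u w1) (f x2 u w2) <= eta * U x1 x2
    + K * (sqnorm w1 + sqnorm (y - h x1 u)) + K * stage_cost h Q Rm x2 w2 u y.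

Variables (x xh : nat -> 'cV[R]_n) (u : nat -> 'cV[R]_m).
Variables (w wh : nat -> 'cV[R]_q) (v y : nat -> 'cV[R]_p).
Hypotheses (x0_in : X (x 0%N)) (xh0_in : X (xh 0%N)) (u_in : forall j, Uset (u j)).
Hypotheses (w_in : forall j, W (w j)) (wh_in : forall j, W (wh j)).
Hypothesis xE : forall j, x j.+1 = f (x j) (u j) (w j).
Hypothesis yE : forall j, y j = h (x j) (u j) + v j.
Hypothesis xhE : forall j, xh j.+1 = f (xh j) (u j) (wh j).

Lemma trajectory_in_X (z : nat -> 'cV[R]_n) (wz : nat -> 'cV[R]_q) :
  X (z 0%N) -> (forall j, W (wz j)) -> (forall j, z j.+1 = f (z j) (u j) (wz j)) ->
  forall j, X (z j).
Proof. by move=> z0_in wz_in zE; elim=> // j IH; rewrite zE; apply: fX. Qed.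

Lemma estimation_error_step j :
  U (x j.+1) (xh j.+1) <= eta * U (x j) (xh j)
    + K * (sqnorm (w j) + sqnorm (v j)) + K * stage_cost h Q Rm (xh j) (wh j) (u j) (y j).
Proof.
have -> : v j = y j - h (x j) (u j) by rewrite yE addrC addKr.
rewrite xE xhE; apply: U_dissipation => //.
- exact: (trajectory_in_X x0_in w_in xE).
- exact: (trajectory_in_X xh0_in wh_in xhE).
Qed.

Lemma estimation_error_sum_le t k :
  c * sqnorm (x (t + k)%N - xh (t + k)%N) <=
    eta ^+ k * (C * sqnorm (x t - xh t))
    + K * (2 * (k%:R * \big[Num.max/0]_(t <= j < t + k) Num.max (sqnorm (w j)) (sqnorm (v j))))
    + K * \sum_(t <= j < t + k) stage_cost h Q Rm (xh j) (wh j) (u j) (y j).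
Proof.
have x_in := trajectory_in_X x0_in w_in xE.
have xh_in := trajectory_in_X xh0_in wh_in xhE.
have [U_lb _] := U_sandwich (x_in (t + k)%N) (xh_in (t + k)%N).
have [_ U_ub] := U_sandwich (x_in t) (xh_in t).
apply: le_trans U_lb _.
pose a j := K * (sqnorm (w j) + sqnorm (v j))
             + K * stage_cost h Q Rm (xh j) (wh j) (u j) (y j).
apply: le_trans (dissipation_sum_le (D := fun j => U (x j) (xh j)) (a := a) (eta := eta) _ _ _) _.
- by rewrite eta_ge0.
- have K_ge0 := ltW K_gt0.
  move=> j _; apply: addr_ge0; apply: mulr_ge0 => //.
    exact: addr_ge0 (sqnorm_ge0 _) (sqnorm_ge0 _).
  exact: stage_cost_ge0.
- by move=> j _; rewrite /a addrA; apply: estimation_error_step.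
rewrite big_split /= -!mulr_sumr -!addrA; apply: lerD.
  by apply: ler_wpM2l; rewrite ?exprn_ge0.
rewrite lerD2r; apply: ler_wpM2l; first exact: ltW.
apply: le_trans (_ : \sum_(t <= j < t + k) 2 * Num.max (sqnorm (w j)) (sqnorm (v j)) <= _).
  apply: ler_sum_nat => j _; rewrite mulr_natl mulr2n.
  by apply: lerD; rewrite le_max lexx ?orbT.
rewrite -mulr_sumr; apply: ler_wpM2l => //.
by rewrite -{2}(addKn t k); apply: sum_le_bigmax.
Qed.

Lemma estimation_error_le t1 t2 tau : (t1 <= tau)%N -> (tau <= t2)%N ->
  sqnorm (x tau - xh tau) <=
    C / c * eta ^+ (tau - t1) * sqnorm (x t1 - xh t1)
    + 2 * K * (t2 - t1).+1%:R / c
        * \big[Num.max/0]_(t1 <= j < tau) Num.max (sqnorm (w j)) (sqnorm (v j))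
    + K / c * perf_J h Q Rm t1 t2 xh wh u y.
Proof.
move=> t1_le t2_ge; set k := (tau - t1)%N.
have := estimation_error_sum_le t1 k; rewrite subnKC //.
set M := \big[Num.max/0]_(_ <= j < tau) _; set L := \sum_(_ <= j < tau) _ => le_err.
have M_ge0 : 0 <= M by apply: bigmax_ge_id.
have L_le : L <= perf_J h Q Rm t1 t2 xh wh u y.
  rewrite /perf_J (big_cat_nat t1_le t2_ge) /= lerDl big_nat sumr_ge0 // => j _.
  exact: stage_cost_ge0.
have k_le : k%:R <= (t2 - t1).+1%:R :> R by rewrite ler_nat leqW // leq_sub2r.
rewrite -(ler_pM2l c_gt0); apply: le_trans le_err _.
have -> : c * (C / c * eta ^+ k * sqnorm (x t1 - xh t1)
    + 2 * K * (t2 - t1).+1%:R / c * M + K / c * perf_J h Q Rm t1 t2 xh wh u y)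
  = eta ^+ k * (C * sqnorm (x t1 - xh t1)) + K * (2 * ((t2 - t1).+1%:R * M))
    + K * perf_J h Q Rm t1 t2 xh wh u y.
  by field; rewrite gt_eqF.
have K_ge0 := ltW K_gt0.
rewrite -!addrA lerD2l; apply: lerD; apply: ler_wpM2l => //.
by rewrite ler_pM2l // ler_wpM2r.
Qed.

End EstimationError.

Theorem proposition3 (R : realType) (n m q p : nat)
  (X : set 'cV[R]_n) (Uset : set 'cV[R]_m) (W : set 'cV[R]_q) (V : set 'cV[R]_p)
  (f : 'cV[R]_n -> 'cV[R]_m -> 'cV[R]_q -> 'cV[R]_n)
  (h : 'cV[R]_n -> 'cV[R]_m -> 'cV[R]_p) (eta : R)
  (Q : 'M[R]_q) (Rm : 'M[R]_p) (t1 t2 : nat) :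
  continuous (fun z : 'cV[R]_n * 'cV[R]_m * 'cV[R]_q => f z.1.1 z.1.2 z.2) ->
  continuous (fun z : 'cV[R]_n * 'cV[R]_m => h z.1 z.2) ->
  W 0 ->
  (forall x u w, X x -> Uset u -> W w -> X (f x u w)) ->
  exp_iIOSS X Uset W f h eta ->
  posdef Q -> posdef Rm ->
  (t1 <= t2)%N ->
  exists C1 C2 C3 : R, 0 < C1 /\ 0 < C2 /\ 0 < C3 /\
    forall (tau : nat) (x xhat : nat -> 'cV[R]_n) (u : nat -> 'cV[R]_m)
           (w what : nat -> 'cV[R]_q) (v y : nat -> 'cV[R]_p),
      (t1 <= tau)%N -> (tau <= t2)%N ->
      X (x 0%N) -> X (xhat 0%N) ->
      (forall j, Uset (u j)) -> (forall j, W (w j)) -> (forall j, W (what j)) ->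
      (forall j, V (v j)) ->
      (forall j, x j.+1 = f (x j) (u j) (w j)) ->
      (forall j, y j = h (x j) (u j) + v j) ->
      (forall j, xhat j.+1 = f (xhat j) (u j) (what j)) ->
      sqnorm (x tau - xhat tau) <=
        C1 * eta ^+ (tau - t1) * sqnorm (x t1 - xhat t1)
        + C2 * \big[Num.max/0]_(t1 <= j < tau)
                  Num.max (sqnorm (w j)) (sqnorm (v j))
        + C3 * perf_J h Q Rm t1 t2 xhat what u y.
Proof.
move=> _ _ _ fX iIOSS Q_pd Rm_pd _.
have /andP[eta_ge0 /ltW eta_le1] := exp_iIOSS_rate iIOSS.
have [U [c [C [K [c_gt0 C_gt0 K_gt0 U_sandwich U_dissipation]]]]] :=
  exp_iIOSS_dissipation iIOSS Q_pd Rm_pd.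
exists (C / c), (2 * K * (t2 - t1).+1%:R / c), (K / c).
split; first exact: divr_gt0.
split; first by rewrite !divr_gt0 ?mulr_gt0.
split; first exact: divr_gt0.
move=> tau x xh u w wh v y t1_le t2_ge x0_in xh0_in u_in w_in wh_in _ xE yE xhE.
by apply: (estimation_error_le _ _ _ _ _ _ fX U_sandwich U_dissipation).
Qed.
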